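(* Let $\mathcal I,\mathcal J$ be ideals on $\omega$ with $\mathcal I\subseteq\mathcal J$. For every cardinal $\kappa\le\mathfrak c$ there exists a Hausdorff, separable, sequentially compact, compact (hence normal) space $X$ with $|X|=\kappa$ such that only countably many points of $X$ are isolated and for every sequence $(f_n)$ in $\mathcal C(X)$, if $(f_n)$ is $\mathcal I$-pointwise convergent to $0$ then $(f_n)$ is $\mathcal J$-$\sigma$-uniformly convergent to $0$.
   Context: $\mathfrak c$ denotes the cardinality of $\mathbb R$. An ideal on $\omega$ is a family $\mathcal I\subseteq\mathcal P(\omega)$ closed under finite unions and subsets, containing all finite sets, with $\omega\notin\mathcal I$. A real sequence $(a_n)$ is $\mathcal I$-convergent to $0$ if $\{n:|a_n|\ge\varepsilon\}\in\mathcal I$ for all $\varepsilon>0$. For a sequence $(f_n)$ of real functions on a set $X$: $\mathcal I$-pointwise convergence to $0$ means $(f_n(x))$ is $\mathcal I$-convergent to $0$ for each $x$; $\mathcal J$-uniform means $\{n:\exists x\in X\,(|f_n(x)|\ge\varepsilon)\}\in\mathcal J$ for each $\varepsilon>0$; $\mathcal J$-$\sigma$-uniform means $X=\bigcup_{k\in\omega}X_k$ with $(f_n\restriction X_k)$ $\mathcal J$-uniformly convergent to $0$ for each $k$. $\mathcal C(X)$ = continuous real functions on $X$. *)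

From HB Require Import structures.
From mathcomp Require Import all_boot all_order all_algebra.
From mathcomp Require Import all_classical all_reals all_analysis.
Set Implicit Arguments. Unset Strict Implicit. Unset Printing Implicit Defensive.
Import Order.TTheory GRing.Theory Num.Theory.
Import numFieldNormedType.Exports.
Local Open Scope classical_set_scope.
Local Open Scope ring_scope.

Definition ideal (I : set (set nat)) : Prop :=
  (forall A B, I A -> I B -> I (A `|` B)) /\
  (forall A B, B `<=` A -> I A -> I B) /\
  (forall A, finite_set A -> I A) /\
  ~ I setT.

Definition Iconv0 (R : realType) (I : set (set nat)) (a : nat -> R) : Prop :=
  forall eps : R, 0 < eps -> I [set n | eps <= `|a n|].

Definition Ipointwise0 (R : realType) (X : Type) (I : set (set nat))
  (f : nat -> X -> R) : Prop :=
  forall x : X, Iconv0 I (fun n => f n x).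

Definition Juniform0_on (R : realType) (X : Type) (J : set (set nat))
  (f : nat -> X -> R) (Y : set X) : Prop :=
  forall eps : R, 0 < eps -> J [set n | exists2 x, Y x & eps <= `|f n x|].

Definition Jsigma_uniform0 (R : realType) (X : Type) (J : set (set nat))
  (f : nat -> X -> R) : Prop :=
  exists Xk : nat -> set X,
    \bigcup_k Xk k = setT /\ forall k, Juniform0_on J f (Xk k).

Definition separable_space (X : topologicalType) : Prop :=
  exists2 D : set X, countable D & closure D = setT.

Definition seq_compact_space (X : topologicalType) : Prop :=
  forall u : nat -> X, exists phi : nat -> nat,
    (forall n, (phi n < phi n.+1)%N) /\ exists x : X, (u \o phi) @ \oo --> x.

From HB Require Import structures.
From mathcomp Require Import all_boot all_order all_algebra.
From mathcomp Require Import all_classical all_reals all_analysis.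
From mathcomp Require Import lra.
Import Order.TTheory GRing.Theory Num.Theory.
Import numFieldNormedType.Exports.
Local Open Scope classical_set_scope.
Local Open Scope ring_scope.
Set Implicit Arguments. Unset Strict Implicit. Unset Printing Implicit Defensive.

(* X is the one-point compactification of a Mrówka–Isbell space built on K.
   For infinite K fix distinct points e 0, e 1, ... of K: the e n.+1 are
   isolated, e 0 is the point at infinity, and every other r in K is a node
   carrying the infinite set A r of the e (code r n), where code r n encodes n
   together with floor (r * n.+1).  Distinct reals share this floor for only
   finitely many n, so the A r are almost disjoint, which is what makes X
   Hausdorff.  The countable set of non-nodes is dense and contains every
   isolated point.
   Every neighbourhood of infinity contains all but finitely many nodes, so a
   continuous function differs from its value at infinity at only countably
   many points.  For continuous f n, X therefore splits into the set where
   every f n is constantly f n (infinity), on which J-uniform convergence is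
   I-convergence at infinity, and countably many singletons.  A finite K is
   the same construction without nodes, i.e. a discrete space. *)

Lemma near_forall_finite (T : Type) (F : set_system T) (I : choiceType)
    (P : I -> T -> Prop) {FF : Filter F} (D : set I) :
  finite_set D -> (forall i, D i -> \forall t \near F, P i t) ->
  \forall t \near F, forall i, D i -> P i t.
Proof. by move=> /finite_fsetP [G ->] PF; exact: filter_bigI. Qed.
Arguments near_forall_finite {T} F {I} P {FF D}.

Lemma frequently_subseq (S : set nat) : ~ (\forall n \near \oo, ~ S n) ->
  exists phi : nat -> nat, (forall k, (phi k < phi k.+1)%N) /\ forall k, S (phi k).
Proof.
move=> Sfreq.
have /choice [g gS] : forall m, exists n, (m <= n)%N /\ S n.
  move=> m; apply: contrapT => none; apply: Sfreq; exists m => // n mn Sn.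
  by apply: none; exists n.
pose phi := fix phi k := if k is k'.+1 then g (phi k').+1 else g 0%N.
by exists phi; split=> [k|[|k]] /=; [exact: (gS _).1|exact: (gS _).2|exact: (gS _).2].
Qed.

Lemma increasing_nat_cvg (phi : nat -> nat) :
  (forall k, (phi k < phi k.+1)%N) -> phi @ \oo --> \oo.
Proof.
move=> phiS; have le_phi k : (k <= phi k)%N.
  by elim: k => // k IH; exact: leq_ltn_trans IH (phiS k).
move=> B [N _ NB]; exists N => // k Nk; apply: NB; exact: leq_trans Nk (le_phi k).
Qed.

Lemma countableU (T : Type) (A B : set T) :
  countable A -> countable B -> countable (A `|` B).
Proof. by move=> cA cB; rewrite -bigcup2E; apply: bigcup_countable => // -[|[|]]. Qed.

Lemma compact_finite_kernel (T : topologicalType) :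
  (forall U : T -> set T, (forall x, open_nbhs x (U x)) ->
    exists2 F, finite_set F & forall y, exists2 x, F x & U x y) ->
  compact [set: T].
Proof.
move=> kernel F FF _; apply: contrapT => noclust.
have /choice [AU AUsep] : forall p : T, exists AU : set T * set T,
    [/\ F AU.1, open_nbhs p AU.2 & AU.1 `&` AU.2 = set0].
  move=> p; apply: contrapT => nsep; apply: noclust; exists p; split=> // A B FA.
  rewrite nbhsE => -[U pU UB]; apply: contrapT => AB0; apply: nsep; exists (A, U).
  split=> //; apply/seteqP; split=> // z [Az Uz]; apply: AB0; exists z; split=> //.
  exact: UB.
have [G Gfin GU] : exists2 G, finite_set G & forall y, exists2 x, G x & (AU x).2 y.
  by apply: kernel => p; case: (AUsep p).
have /filter_ex [y Gy] : \forall y \near F, forall x, G x -> (AU x).1 y.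
  apply: (near_forall_finite F (fun x y => (AU x).1 y) Gfin) => x _.
  by case: (AUsep x).
have [x Gx Uxy] := GU y; have [_ _ AU0] := AUsep x.
suff : ((AU x).1 `&` (AU x).2) y by rewrite AU0.
by split=> //; exact: Gy.
Qed.

Lemma Juniform0_on_constant (Y : Type) (R : realType) (I J : set (set nat))
    (f : nat -> Y -> R) (Z : set Y) :
  ideal J -> I `<=` J -> Ipointwise0 I f ->
  (forall x y, Z x -> Z y -> forall n, f n x = f n y) -> Juniform0_on J f Z.
Proof.
move=> [_ [Jsub [Jfin _]]] IJ fI fZ eps eps0.
have [[x0 Zx0]|Z0] := pselect (exists x, Z x).
  apply: (Jsub _ _ _ (IJ _ (fI x0 eps eps0))) => n [x Zx].
  by rewrite /= (fZ x x0 Zx Zx0).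
by apply: (Jsub _ _ _ (Jfin _ (finite_set0 _))) => n [x Zx _]; apply: Z0; exists x.
Qed.

Lemma Jsigma_uniform0_countable_exceptions (Y : Type) (R : realType)
    (I J : set (set nat)) (f : nat -> Y -> R) (C : set Y) :
  ideal J -> I `<=` J -> countable C ->
  (forall x y, ~ C x -> ~ C y -> forall n, f n x = f n y) ->
  Ipointwise0 I f -> Jsigma_uniform0 J f.
Proof.
move=> hJ IJ /countable_injP [c cinj] fC fI.
exists (fun k => if k is k'.+1 then C `&` c @^-1` [set k'] else ~` C); split.
  apply/seteqP; split=> // x _; have [Cx|nCx] := pselect (C x).
    by exists (c x).+1.
  by exists 0%N.
case=> [|k]; apply: (Juniform0_on_constant hJ IJ fI); first exact: fC.
move=> x y [Cx cx] [Cy cy] n.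
by have -> : x = y by apply: cinj; [exact: mem_set|exact: mem_set|rewrite cx cy].
Qed.

Lemma floor_eq_dist_lt1 (R : realType) (a b : R) :
  Num.floor a = Num.floor b -> `|a - b| < 1.
Proof.
move=> ab; have := floor_itv a; have := floor_itv b; rewrite -ab intrD.
by move=> /andP [? ?] /andP [? ?]; rewrite ltr_norml; apply/andP; split; lra.
Qed.

Lemma floor_mulSn_eq_finite (R : realType) (a b : R) : a != b ->
  finite_set [set n : nat | Num.floor (a * n.+1%:R) = Num.floor (b * n.+1%:R)].
Proof.
move=> ab; have d0 : 0 < `|a - b| by rewrite normr_gt0 subr_eq0.
have [N _ Nlt] := near_infty_natSinv_lt (PosNum d0).
apply: sub_finite_set (finite_II N) => n /= /floor_eq_dist_lt1.
rewrite -mulrBl normrM normr_nat => lt1; rewrite ltnNge; apply/negP => /Nlt /= inv_lt.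
have : 1 < `|a - b| * n.+1%:R by rewrite -ltr_pdivrMr ?ltr0n // div1r.
by rewrite ltNge (ltW lt1).
Qed.

Section PsiOpen.
Variables (T : choiceType) (node infty : set T) (A : T -> set T).

(* A node r must keep all but finitely many points of A r; a neighbourhood of
   a point at infinity may omit only finitely many points and finitely many of
   the sets A r. *)
Definition psi_hull (F : set T) : set T :=
  infty `|` F `|` \bigcup_(r in F `&` node) A r.

Lemma psi_hullS : {homo psi_hull : F G / F `<=` G}.
Proof.
move=> F G FG y [[iy|Fy]|[r [Fr rn] Ary]]; [by left; left|by left; right; apply: FG|].
by right; exists r => //; split=> //; apply: FG.
Qed.

Definition psi_open (U : set T) : Prop :=
  (forall r, node r -> U r -> finite_set (A r `\` U)) /\
  (forall x, infty x -> U x -> exists2 F, finite_set F & ~` U `<=` psi_hull F).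

Lemma psi_openT : psi_open setT.
Proof.
split=> [r _ _|x _ _]; first by rewrite setDT; exact: finite_set0.
by exists set0; [exact: finite_set0|rewrite setCT].
Qed.

Lemma psi_openI : setI_closed psi_open.
Proof.
move=> U V [U1 U2] [V1 V2]; split=> [r rn [Ur Vr]|x xi [Ux Vx]].
  by rewrite setDIr finite_setU; split; [exact: U1|exact: V1].
have [FU FUfin FUcov] := U2 x xi Ux; have [FV FVfin FVcov] := V2 x xi Vx.
exists (FU `|` FV); first by rewrite finite_setU.
rewrite setCI subUset; split.
  by apply: subset_trans FUcov _; apply: psi_hullS; exact: subsetUl.
by apply: subset_trans FVcov _; apply: psi_hullS; exact: subsetUr.
Qed.

Lemma psi_open_bigcup (I : Type) (f : I -> set T) :
  (forall i, psi_open (f i)) -> psi_open (\bigcup_i f i).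
Proof.
move=> fo; split=> [r rn [i _ fir]|x xi [i _ fxi]].
  apply: sub_finite_set ((fo i).1 r rn fir); apply: setDS.
  by move=> y fiy; exists i.
have [F Ffin Fcov] := (fo i).2 x xi fxi.
by exists F => // y nfy; apply: Fcov => fiy; apply: nfy; exists i.
Qed.

End PsiOpen.

Definition psi_space (T : choiceType) (node infty : set T) (A : T -> set T) : Type := T.

HB.instance Definition _ T node infty A := Choice.copy (@psi_space T node infty A) T.
HB.instance Definition _ T node infty A :=
  isOpenTopological.Build (@psi_space T node infty A)
    (psi_openT node infty A) (@psi_openI T node infty A) (@psi_open_bigcup T node infty A).

Record psi_data (T : choiceType) (node infty : set T) (A : T -> set T) : Prop := {
  infty_unique : forall x y, infty x -> infty y -> x = y;
  node_not_infty : forall r, node r -> ~ infty r;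
  A_isolated : forall r y, A r y -> ~ node y /\ ~ infty y;
  A_almost_disjoint : forall r s, node r -> node s -> r <> s -> finite_set (A r `&` A s);
  A_infinite : forall r, node r -> infinite_set (A r);
  finite_or_infty : finite_set [set: T] \/ exists x0, infty x0;
  countable_non_node : countable (~` node) }.

Section PsiSpace.
Variables (T : choiceType) (node infty : set T) (A : T -> set T).
Local Notation X := (psi_space node infty A).

Lemma open_node_cofinite (U : set X) (r : X) :
  open U -> node r -> U r -> finite_set (A r `\` U).
Proof. by case=> + _; apply. Qed.

Lemma open_infty_cocompact (U : set X) (x : X) :
  open U -> infty x -> U x -> exists2 F, finite_set F & ~` U `<=` psi_hull node infty A F.
Proof. by case=> _; apply. Qed.

Lemma psi_open_set1 (p : X) : ~ node p -> ~ infty p -> open [set p].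
Proof. by move=> np ip; split=> [_ /[swap] -> /np|_ /[swap] -> /ip]. Qed.

Lemma psi_open_setC1 (p : X) : open (~` [set p]).
Proof.
split=> [r _ _|x _ _].
  by apply: sub_finite_set (finite_set1 p) => y [_ /contrapT].
exists [set p]; first exact: finite_set1.
by rewrite setCK => y ->; left; right.
Qed.

Hypothesis psiD : psi_data node infty A.

Lemma psi_open_basic (r : X) : node r -> open (r |` A r).
Proof.
move=> rn; split=> [s sn [->|/(A_isolated psiD) [] //]|
                    x xi [xr|/(A_isolated psiD) [] //]].
  by apply: sub_finite_set (finite_set0 _) => y [Ary []]; right.
by move: xi; rewrite xr => /(node_not_infty psiD rn).
Qed.

Lemma psi_open_setC_basic (r : X) : node r -> open (~` (r |` A r)).
Proof.
move=> rn; split=> [s sn nVs|x _ _].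
  have sr : s <> r by move=> sr; apply: nVs; left.
  apply: sub_finite_set (A_almost_disjoint psiD sn rn sr) => y [Asy /contrapT [yr|Ary]] //.
  by have [] := A_isolated psiD Asy; rewrite yr.
exists [set r]; first exact: finite_set1.
by rewrite setCK => y [->|Ary]; [left; right|right; exists r].
Qed.

Lemma psi_open_basic_setD (r s : X) :
  node r -> node s -> r <> s -> open ((s |` A s) `\` A r).
Proof.
move=> rn sn rs; split=> [t tn [[ts|/(A_isolated psiD) [] //] _]|
                          x xi [[xs|/(A_isolated psiD) [] //] _]].
  rewrite ts; apply: sub_finite_set (A_almost_disjoint psiD sn rn (nesym rs)).
  by move=> y [Asy nWy]; split=> //; apply: contrapT => nAry; apply: nWy; split=> //; right.
by move: xi; rewrite xs => /(node_not_infty psiD sn).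
Qed.

Lemma psi_separate (x y : X) : ~ infty x -> x <> y ->
  exists U W : set X, [/\ open U, open W, U x, W y & U `&` W = set0].
Proof.
move=> xi xy.
have [[yn yi]|yni] := pselect (~ node y /\ ~ infty y).
  exists (~` [set y]), [set y].
  by split; [exact: psi_open_setC1|exact: psi_open_set1|exact: xy|by []|exact: setICl].
have [xn|xnn] := pselect (node x); last first.
  exists [set x], (~` [set x]).
  by split; [exact: psi_open_set1|exact: psi_open_setC1|by []|exact: nesym xy|exact: setICr].
have [yn|ynn] := pselect (node y).
  exists (x |` A x), ((y |` A y) `\` A x); split.
  - exact: psi_open_basic.
  - exact: psi_open_basic_setD.
  - by left.
  - by split; [left|move/(A_isolated psiD) => []].
  apply/seteqP; split=> // z [[->|Axz] [[xy'|Ayx] nAxz]] //.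
  by have [] := A_isolated psiD Ayx.
have yi : infty y by apply: contrapT => yi; apply: yni.
exists (x |` A x), (~` (x |` A x)); split.
- exact: psi_open_basic.
- exact: psi_open_setC_basic.
- by left.
- by move=> [yx|/(A_isolated psiD) []//]; apply: xy.
- exact: setICr.
Qed.

Lemma psi_hausdorff : hausdorff_space X.
Proof.
rewrite open_hausdorff => x y /eqP xy.
suff [U [W [oU oW Ux Wy UW]]] :
    exists U W : set X, [/\ open U, open W, U x, W y & U `&` W = set0].
  by exists (U, W); [split; exact/mem_set|split=> //; apply/eqP].
have [xi|xni] := pselect (infty x); last exact: psi_separate.
have yni : ~ infty y by move/(infty_unique psiD xi).
have [W [U [oW oU Wy Ux WU]]] := psi_separate yni (nesym xy).
by exists U, W; split=> //; rewrite setIC.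
Qed.

Lemma psi_nbhs_node_meet (r : X) (B : set X) :
  node r -> nbhs r B -> exists y, A r y /\ B y.
Proof.
move=> rn; rewrite nbhsE => -[U [oU Ur] UB].
have /infinite_setN0 [y [Ary nAUy]] :=
  infinite_setD (A_infinite psiD rn) (open_node_cofinite oU rn Ur).
by exists y; split=> //; apply: UB; apply: contrapT => nUy; apply: nAUy.
Qed.

Lemma psi_closure_non_node : closure (~` node : set X) = setT.
Proof.
rewrite -subTset => x _ B xB.
have [xn|xnn] := pselect (node x); last by exists x; split=> //; exact: nbhs_singleton.
have [y [Axy By]] := psi_nbhs_node_meet xn xB.
by exists y; split=> //; exact: (A_isolated psiD Axy).1.
Qed.

Lemma psi_isolated_non_node : isolated [set: X] `<=` ~` node.
Proof.
move=> x [_ [B xB BT]] xn.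
have [y [Axy By]] := psi_nbhs_node_meet xn xB.
have : (B `&` setT) y by [].
by rewrite BT => yx; have [] := A_isolated psiD Axy; rewrite yx.
Qed.

Lemma psi_finite_kernel (U : X -> set X) : (forall x, open_nbhs x (U x)) ->
  exists2 F, finite_set F & forall y, exists2 x, F x & U x y.
Proof.
move=> oU; have Uself y : U y y by case: (oU y).
case: (finite_or_infty psiD) => [Tfin|[x0 x0i]].
  by exists setT => // y; exists y.
have [oUx0 Ux0] := oU x0.
have [F0 F0fin F0cov] := open_infty_cocompact oUx0 x0i Ux0.
exists (x0 |` F0 `|` \bigcup_(r in F0 `&` node) (A r `\` U r)).
  rewrite !finite_setU; split; first by split; [exact: finite_set1|].
  apply: bigcup_finite; first exact: finite_setIl.
  by move=> r [_ rn]; have [oUr Urr] := oU r; exact: open_node_cofinite oUr rn Urr.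
move=> y; have [Ux0y|/F0cov] := pselect (U x0 y); first by exists x0 => //; left; left.
case=> [[yi|F0y]|[r [F0r rn] Ary]].
- by exists x0; [left; left|rewrite -(infty_unique psiD x0i yi)].
- by exists y; [left; right|].
- have [Ury|nUry] := pselect (U r y); first by exists r => //; left; right.
  by exists y => //; right; exists r.
Qed.

Lemma psi_compact : compact [set: X].
Proof. exact/compact_finite_kernel/psi_finite_kernel. Qed.

Lemma psi_cvg_node (v : nat -> X) (r : X) : node r -> (forall n, A r (v n)) ->
  (forall y, \forall n \near \oo, v n <> y) -> v @ \oo --> r.
Proof.
move=> rn vA v_leaves B; rewrite nbhsE => -[U [oU Ur] UB].
suff : \forall n \near \oo, B (v n) by [].
have v_leaves_ArU := near_forall_finite \oo (fun y n => v n <> y)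
  (open_node_cofinite oU rn Ur) (fun y _ => v_leaves y).
near=> n; apply: UB; apply: contrapT => nUvn.
suff : forall y, (A r `\` U) y -> v n <> y by move/(_ (v n) (conj (vA n) nUvn)).
by near: n; exact: v_leaves_ArU.
Unshelve. all: end_near. Qed.

Lemma psi_cvg_infty (v : nat -> X) (x0 : X) : infty x0 ->
  (forall y, \forall n \near \oo, v n <> y) ->
  (forall r, node r -> \forall n \near \oo, ~ A r (v n)) -> v @ \oo --> x0.
Proof.
move=> x0i v_leaves v_leaves_A B; rewrite nbhsE => -[U [oU Ux0] UB].
have [F Ffin Fcov] := open_infty_cocompact oU x0i Ux0.
suff : \forall n \near \oo, B (v n) by [].
have : \forall n \near \oo, forall y, F y -> v n <> y /\ (node y -> ~ A y (v n)).
  apply: (near_forall_finite \oo (fun y n => v n <> y /\ (node y -> ~ A y (v n))) Ffin).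
  move=> y _.
  have [yn|ynn] := pselect (node y).
    by apply: filterS (filterI (v_leaves y) (v_leaves_A y yn)) => n [].
  by apply: filterS (v_leaves y) => n vny; split.
move=> /(filterI (v_leaves x0)); apply: filterS => n [vnx0 vnF].
apply: UB; apply: contrapT => /Fcov [[vni|Fvn]|[r [Fr rn] Arvn]].
- exact: vnx0 (infty_unique psiD vni x0i).
- exact: (vnF _ Fvn).1.
- exact: (vnF _ Fr).2 rn Arvn.
Qed.

Lemma psi_seq_compact : seq_compact_space X.
Proof.
move=> u.
have [[x ux]|/forallNP u_leaves] := pselect (exists x, ~ \forall n \near \oo, u n <> x).
  have [phi [phiS uphi]] := frequently_subseq ux.
  exists phi; split=> //; exists x.
  suff -> : u \o phi = cst x by exact: cvg_cst.
  by apply/funext => k; exact: uphi.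
have {}u_leaves x : \forall n \near \oo, u n <> x := contrapT (u_leaves x).
case: (finite_or_infty psiD) => [Tfin|[x0 x0i]].
  have /filter_ex [n /(_ (u n) Logic.I)] // :
      \forall n \near \oo, forall y, [set: X] y -> u n <> y.
    by apply: (near_forall_finite \oo (fun y n => u n <> y) Tfin) => y _; exact: u_leaves.
have [[r [rn ur]]|/forallNP u_leaves_A] :=
  pselect (exists r, node r /\ ~ \forall n \near \oo, ~ A r (u n)).
  have [phi [phiS uphi]] := frequently_subseq ur.
  exists phi; split=> //; exists r; apply: psi_cvg_node => // y.
  exact: increasing_nat_cvg phiS _ (u_leaves y).
exists id; split=> //; exists x0; apply: psi_cvg_infty => // r rn.
by apply: contrapT => ur; apply: (u_leaves_A r).
Qed.

Lemma psi_nbhs_infty_cofinite_nodes (x0 : X) (B : set X) :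
  infty x0 -> nbhs x0 B -> finite_set (node `\` B).
Proof.
move=> x0i; rewrite nbhsE => -[U [oU Ux0] UB].
have [F Ffin Fcov] := open_infty_cocompact oU x0i Ux0.
apply: sub_finite_set Ffin => r [rn nBr].
have /Fcov [[ri|//]|[s _ Asr]] : ~ U r by move/UB.
- by case: (node_not_infty psiD rn ri).
- by case: (A_isolated psiD Asr).
Qed.

Lemma psi_continuous_countable_variation (R : realType) (g : X -> R) (x0 : X) :
  continuous g -> infty x0 -> countable [set x | g x <> g x0].
Proof.
move=> gc x0i.
pose far m := node `\` (g @^-1` ball (g x0) m.+1%:R^-1).
have far_finite m : finite_set (far m).
  apply: psi_nbhs_infty_cofinite_nodes x0i _.
  by apply: gc; apply: nbhsx_ballx; rewrite invr_gt0 ltr0n.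
apply: (@sub_countable _ _ _ (~` node `|` \bigcup_m far m)).
  apply: subset_card_le => x gx.
  have [xn|xnn] := pselect (node x); last by left.
  have d0 : 0 < `|g x0 - g x| by rewrite normr_gt0 subr_eq0; apply/eqP => /esym.
  have /filter_ex [m m_lt] := near_infty_natSinv_lt (PosNum d0).
  right; exists m => //; split=> // gball.
  by have := lt_trans m_lt gball; rewrite ltxx.
apply: countableU; first exact: countable_non_node psiD.
apply: bigcup_countable => [|m _]; first exact: countableP.
exact/finite_set_countable/far_finite.
Qed.

Lemma psi_sigma_uniform (R : realType) (I J : set (set nat)) (f : nat -> X -> R) :
  ideal J -> I `<=` J -> (forall n, continuous (f n)) ->
  Ipointwise0 I f -> Jsigma_uniform0 J f.
Proof.
move=> hJ IJ fc; case: (finite_or_infty psiD) => [Tfin|[x0 x0i]].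
  apply: (Jsigma_uniform0_countable_exceptions (C := setT)) => //.
  - exact: finite_set_countable.
  - by move=> x y /(_ Logic.I).
pose C := \bigcup_n [set x | f n x <> f n x0].
apply: (Jsigma_uniform0_countable_exceptions (C := C)) => //.
  apply: bigcup_countable => [|n _]; first exact: countableP.
  exact: psi_continuous_countable_variation.
have fx0 n z : ~ C z -> f n z = f n x0.
  by move=> nCz; apply: contrapT => fz; apply: nCz; exists n.
by move=> x y nCx nCy n; rewrite !fx0.
Qed.

End PsiSpace.

Lemma psi_data_discrete (T : choiceType) :
  finite_set [set: T] -> psi_data (@set0 T) set0 (fun _ => set0).
Proof.
move=> Tfin; split=> //; first by left.
by rewrite setC0; exact: finite_set_countable.
Qed.

Lemma psi_data_reals (R : realType) (K : set R) : infinite_set K ->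
  exists (node infty : set K) (A : K -> set K), psi_data node infty A.
Proof.
move=> /infiniteP /pcard_leP [f].
pose e n : K := exist _ (f n) (mem_set (@funS _ _ _ _ f n Logic.I)).
have f_inj : injective f := injT.
have e_inj : injective e by move=> m n /(congr1 val) /f_inj.
(* The successor keeps e 0, the point at infinity, out of every A r. *)
pose code (r : K) n := (choice.pickle (n, Num.floor (val r * n.+1%:R))).+1.
have code_inj r s m n : code r m = code s n ->
    m = n /\ Num.floor (val r * m.+1%:R) = Num.floor (val s * m.+1%:R).
  by move=> [] /(pcan_inj choice.pickleK) [-> ->].
exists (~` range e), [set x | x = e 0%N], (fun r => range (e \o code r)); split.
- by move=> x y -> ->.
- by move=> r /[swap] ->; apply; exists 0%N.
- move=> r _ [n _ <-]; split; first by apply; exists (code r n).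
  by move=> /e_inj.
- move=> r s _ _ rs; have rs' : val r != val s by apply/eqP => /val_inj.
  apply: sub_finite_set (finite_image (e \o code r) (floor_mulSn_eq_finite rs')).
  by move=> _ [[m _ <-] [n _ /e_inj /esym /code_inj [_ fl]]]; exists m.
- move=> r _; have code_r_inj : {in setT &, injective (e \o code r)}.
    by move=> m n _ _ /e_inj /code_inj [].
  by rewrite (eq_finite_set (inj_card_eq code_r_inj)); exact: infinite_nat.
- by right; exists (e 0%N).
- by rewrite setCK; exact: card_image_le.
Qed.

(* A cardinal kappa <= c is represented as the cardinality of a set K of reals. *)
Theorem theorem6p4 (R : realType) (I J : set (set nat))
  (hI : ideal I) (hJ : ideal J) (hIJ : I `<=` J) (K : set R) :
  exists X : topologicalType,
    [/\ hausdorff_space X, separable_space X, seq_compact_space X,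
        compact [set: X] &
        ([set: X] #= K)%card] /\
    countable (isolated [set: X]) /\
        (
        forall f : nat -> X -> R,
          (forall n, continuous (f n)) ->
          Ipointwise0 I f -> Jsigma_uniform0 J f).
Proof.
have [node [infty [A psiD]]] :
    exists (node infty : set K) (A : K -> set K), psi_data node infty A.
  have [Kfin|/psi_data_reals //] := pselect (finite_set K).
  exists set0, set0, (fun _ => set0); apply: psi_data_discrete.
  by rewrite (eq_finite_set (card_setT K)).
exists (psi_space node infty A); split; [split|split].
- exact: psi_hausdorff.
- by exists (~` node); [exact: countable_non_node psiD|exact: psi_closure_non_node].
- exact: psi_seq_compact.
- exact: psi_compact.
- exact: card_setT.
- apply: sub_countable (countable_non_node psiD).
  exact/subset_card_le/psi_isolated_non_node.
- by move=> f; exact: psi_sigma_uniform.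
Qed.
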